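(* Let $S$ be a nonempty complete lattice and let $F:S\to 2^S$ be a V-ascending correspondence. Suppose that for every $x\in S$, the value $F(x)$, with the order induced from $S$, is a nonempty complete lattice. Then $\mathrm{Fix}(F)=\{s\in S: s\in F(s)\}$, with the order induced from $S$, is a nonempty complete lattice.
   Context: A poset $P$ is a complete lattice if every nonempty subset of $P$ has a supremum and an infimum in $P$ (this is an intrinsic property of $P$; for $F(x)$ the suprema/infima are taken within $F(x)$, not necessarily agreeing with those in $S$). For a lattice $S$ and a correspondence $F:S\to 2^S$: $F$ is lower V-ascending if for all $x<x'$ in $S$ (strict inequality), every $y\in F(x)$ and every $y'\in F(x')$, one has $y\wedge y'\in F(x)$; $F$ is upper V-ascending if under the same conditions $y\vee y'\in F(x')$; $F$ is V-ascending if it is both upper and lower V-ascending. *)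

From mathcomp Require Import all_boot all_order.
Set Implicit Arguments. Unset Strict Implicit. Unset Printing Implicit Defensive.
Import Order.Theory.
Local Open Scope order_scope.

Section Defs.
Context {d : Order.disp_t} {T : latticeType d}.

Definition is_sup_in (A B : T -> Prop) (s : T) : Prop :=
  A s /\ (forall b, B b -> b <= s) /\
  (forall u, A u -> (forall b, B b -> b <= u) -> s <= u).

Definition is_inf_in (A B : T -> Prop) (s : T) : Prop :=
  A s /\ (forall b, B b -> s <= b) /\
  (forall u, A u -> (forall b, B b -> u <= b) -> u <= s).

Definition complete_lattice_in (A : T -> Prop) : Prop :=
  forall B : T -> Prop, (exists b, B b) -> (forall b, B b -> A b) ->
    (exists s, is_sup_in A B s) /\ (exists s, is_inf_in A B s).

Definition nonempty_complete_lattice_in (A : T -> Prop) : Prop :=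
  (exists a, A a) /\ complete_lattice_in A.

Definition lower_V_ascending (F : T -> T -> Prop) : Prop :=
  forall x x', x < x' -> forall y y', F x y -> F x' y' -> F x (y `&` y').

Definition upper_V_ascending (F : T -> T -> Prop) : Prop :=
  forall x x', x < x' -> forall y y', F x y -> F x' y' -> F x' (y `|` y').

Definition V_ascending (F : T -> T -> Prop) : Prop :=
  upper_V_ascending F /\ lower_V_ascending F.

Definition Fix (F : T -> T -> Prop) : T -> Prop := fun s => F s s.

End Defs.

(* Tarski's argument, adapted to correspondences.  Suppose P has a top element
   and meets of nonempty subsets, G maps P into P, is lower V-ascending on P,
   and every G(x) has a least element.  Then the meet x* of the prefixed
   points {x in P | G(x) has an element below x} is the least fixed point of
   G in P: the least element z of G(x* ) lies below every prefixed point
   (lower V-ascendingness puts z /\ y into G(x* )) and is itself prefixed,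
   so z = x*.  For a set B of fixed points, run this on the upper bounds of B
   with G(x) = F(x) restricted to upper bounds of B; upper V-ascendingness
   gives G(x) a least element, and the least fixed point obtained is the
   supremum of B in Fix(F).  Infima follow by duality, and B empty shows that
   Fix(F) is nonempty. *)
From mathcomp Require Import all_boot all_order.
Set Implicit Arguments. Unset Strict Implicit. Unset Printing Implicit Defensive.
Import Order.Theory.
Local Open Scope order_scope.

Section Bounds.
Context {d : Order.disp_t} {T : latticeType d}.

Definition ubound (A : T -> Prop) (x : T) : Prop := forall a, A a -> a <= x.

Definition least (A : T -> Prop) (s : T) : Prop := A s /\ forall a, A a -> s <= a.

Lemma greatest_complete_lattice_in (A : T -> Prop) :
  nonempty_complete_lattice_in A -> exists2 t, A t & ubound A t.
Proof.
move=> [neA hA]; have [[t [At [ubt _]]] _] := hA A neA (fun _ h => h).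
by exists t.
Qed.

End Bounds.

Section LeastFixedPoint.
Context {d : Order.disp_t} {T : latticeType d}.
Variables (P : T -> Prop) (G : T -> T -> Prop).

Hypothesis P_inf : forall D : T -> Prop, (exists b, D b) ->
  (forall b, D b -> P b) -> exists s, is_inf_in P D s.
Hypothesis P_top : exists2 t, P t & ubound P t.
Hypothesis G_into : forall x y, P x -> G x y -> P y.
Hypothesis G_least : forall x, P x -> exists z, least (G x) z.
Hypothesis G_lowV : forall x x', P x -> P x' -> x < x' ->
  forall y y', G x y -> G x' y' -> G x (y `&` y').

Let prefixed (x : T) : Prop := P x /\ exists2 y, G x y & y <= x.

Lemma least_value_lb_prefixed {xs z} :
  is_inf_in P prefixed xs -> least (G xs) z -> forall x, prefixed x -> z <= x.
Proof.
move=> [Pxs [lbxs _]] [Gz zmin] x px; case: (px) => Px [y Gy yx].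
have := lbxs x px; rewrite le_eqVlt => /predU1P[xs_x|xs_lt_x].
  by subst x; apply: le_trans (zmin _ Gy) yx.
have Gzy : G xs (z `&` y) := G_lowV Pxs Px xs_lt_x Gz Gy.
by apply: le_trans (zmin _ Gzy) _; rewrite leIxr.
Qed.

Lemma least_value_prefixed {xs z} :
  is_inf_in P prefixed xs -> least (G xs) z -> prefixed z.
Proof.
move=> xs_inf z_least; case: (xs_inf) (z_least) => Pxs [_ glbxs] [Gz _].
have Pz : P z := G_into Pxs Gz.
split=> //; have := glbxs z Pz (least_value_lb_prefixed xs_inf z_least).
rewrite le_eqVlt => /predU1P[zxs|z_lt_xs]; first by exists z => //; rewrite {1}zxs.
have [w [Gw _]] := G_least Pz.
have Gwz : G z (w `&` z) := G_lowV Pz Pxs z_lt_xs Gw Gz.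
by exists (w `&` z); last exact: leIr.
Qed.

Theorem least_fixed_point : exists s, least (fun x => P x /\ G x x) s.
Proof.
have [t Pt tmax] := P_top; have [y [Gy _]] := G_least Pt.
have prefixed_t : prefixed t by split=> //; exists y => //; exact: tmax (G_into Pt Gy).
have [xs xs_inf] := P_inf (ex_intro _ t prefixed_t) (fun _ h => proj1 h).
have [z z_least] := G_least (proj1 xs_inf).
have z_prefixed := least_value_prefixed xs_inf z_least.
case: (xs_inf) (z_least) => Pxs [lbxs glbxs] [Gz _].
have zxs : z = xs.
  apply: le_anti; rewrite lbxs // andbT.
  exact: glbxs (proj1 z_prefixed) (least_value_lb_prefixed xs_inf z_least).
exists xs; split=> [|p [Pp Gpp]]; first by split=> //; rewrite -{2}zxs.
by apply: lbxs; split=> //; exists p.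
Qed.

End LeastFixedPoint.

Section FixedPointSup.
Context {d : Order.disp_t} {S : latticeType d}.
Variable F : S -> S -> Prop.

Hypothesis S_complete : nonempty_complete_lattice_in (fun _ : S => True).
Hypothesis F_upV : upper_V_ascending F.
Hypothesis F_lowV : lower_V_ascending F.
Hypothesis F_complete : forall x, nonempty_complete_lattice_in (F x).

Variable B : S -> Prop.
Hypothesis B_fixed : forall b, B b -> Fix F b.

Lemma least_upper_value_above x y : ubound B x -> F x y ->
  exists s, least (fun s => F x s /\ ubound B s /\ y <= s) s.
Proof.
move=> Ux Fxy.
(* Joins b \/ y with b < x lie in F(x) by upper V-ascendingness; b = x is
   handled separately since then only x itself is known to lie in F(x). *)
pose E v := v = y \/ (exists2 b, B b & b < x /\ v = b `|` y) \/ (B x /\ v = x).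
have E_F v : E v -> F x v.
  case=> [->|[[b Bb [bx ->]]|[Bx ->]]] //; last exact: B_fixed.
  exact: F_upV bx _ _ (B_fixed Bb) Fxy.
have [[s [Fs [ubs lubs]]] _] :=
  proj2 (F_complete x) E (ex_intro _ y (or_introl erefl)) E_F.
exists s; split.
  split=> //; split; last by apply: ubs; left.
  move=> b Bb; have := Ux b Bb; rewrite le_eqVlt => /predU1P[bx|bx].
    by apply: ubs; right; right; rewrite -bx.
  by apply: le_trans (leUl b y) _; apply: ubs; right; left; exists b.
move=> u [Fu [Uu yu]]; apply: lubs => // v [->|[[b Bb [_ ->]]|[Bx ->]]] //.
  by rewrite leUx Uu.
exact: Uu.
Qed.

Lemma least_upper_value x : ubound B x ->
  exists s, least (fun s => F x s /\ ubound B s) s.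
Proof.
move=> Ux; have [y Fxy] := proj1 (F_complete x).
have [s0 [[Fs0 [Us0 _]] _]] := least_upper_value_above Ux Fxy.
have [_ [e [Fe [lbe _]]]] := proj2 (F_complete x)
  (fun s => F x s /\ ubound B s) (ex_intro _ s0 (conj Fs0 Us0)) (fun _ h => proj1 h).
have [s [[Fs [Us _]] mins]] := least_upper_value_above Ux Fe.
by exists s; split=> // u [Fu Uu]; apply: mins; split=> //; split=> //; apply: lbe.
Qed.

Lemma fixed_point_sup : exists s, is_sup_in (Fix F) B s.
Proof.
pose G x y := F x y /\ ubound B y.
have ubound_inf D : (exists b, D b) -> (forall b, D b -> ubound B b) ->
    exists s, is_inf_in (ubound B) D s.
  move=> [b0 Db0] DU.
  have [_ [i [_ [lbi glbi]]]] := proj2 S_complete D (ex_intro _ b0 Db0) (fun _ _ => I).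
  exists i; split; last by split=> // u _; apply: glbi.
  by move=> b Bb; apply: glbi => // c Dc; apply: DU.
have ubound_top : exists2 t, ubound B t & ubound (ubound B) t.
  have [t _ tmax] := greatest_complete_lattice_in S_complete.
  by exists t => [b _|u _]; apply: tmax.
have G_lowV x x' : ubound B x -> ubound B x' -> x < x' ->
    forall y y', G x y -> G x' y' -> G x (y `&` y').
  move=> _ _ xx' y y' [Fy Uy] [Fy' Uy']; split; first exact: F_lowV xx' _ _ Fy Fy'.
  by move=> b Bb; rewrite lexI Uy ?Uy'.
have [s [[Us [Fss _]] mins]] := least_fixed_point ubound_inf ubound_top
  (fun x y _ (Gxy : G x y) => proj2 Gxy) least_upper_value G_lowV.
by exists s; split=> //; split=> // u Fu Uu; apply: mins.
Qed.

End FixedPointSup.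

Section Duality.
Context {d : Order.disp_t} {S : latticeType d}.

Lemma nonempty_complete_lattice_in_dual (A : S -> Prop) :
  nonempty_complete_lattice_in A -> nonempty_complete_lattice_in (A : S^d -> Prop).
Proof.
move=> [neA hA]; split=> // B neB BA.
by have [[s sup] [i inf]] := hA B neB BA; split; [exists i | exists s].
Qed.

Lemma upper_V_ascending_dual (F : S -> S -> Prop) :
  lower_V_ascending F -> upper_V_ascending (F : S^d -> S^d -> Prop).
Proof.
move=> lowV x x' x'x y y' Fy Fy'.
by have := lowV x' x x'x y' y Fy' Fy; rewrite meetC.
Qed.

Lemma lower_V_ascending_dual (F : S -> S -> Prop) :
  upper_V_ascending F -> lower_V_ascending (F : S^d -> S^d -> Prop).
Proof.
move=> upV x x' x'x y y' Fy Fy'.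
by have := upV x' x x'x y' y Fy' Fy; rewrite joinC.
Qed.

End Duality.

(* F : S -> 2^S is encoded as F x y <-> y \in F(x). *)
Theorem theorem1p3 (d : Order.disp_t) (S : latticeType d)
    (F : S -> S -> Prop) :
  nonempty_complete_lattice_in (fun _ : S => True) ->
  V_ascending F ->
  (forall x : S, nonempty_complete_lattice_in (F x)) ->
  nonempty_complete_lattice_in (Fix F).
Proof.
move=> S_complete [upV lowV] F_complete.
have Fix_sup B : (forall b, B b -> Fix F b) -> exists s, is_sup_in (Fix F) B s.
  exact: fixed_point_sup.
have Fix_inf B : (forall b, B b -> Fix F b) -> exists s, is_inf_in (Fix F) B s.
  exact: (@fixed_point_sup _ S^d F (nonempty_complete_lattice_in_dual S_complete)
    (upper_V_ascending_dual lowV) (lower_V_ascending_dual upV)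
    (fun x => nonempty_complete_lattice_in_dual (F_complete x))).
split; last by move=> B _ BF; split; [exact: Fix_sup | exact: Fix_inf].
by have [s [Fs _]] := Fix_sup (fun _ => False) (fun _ => False_ind _); exists s.
Qed.
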